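(* Let $x_1,\ldots,x_n\in\mathcal{X}$ be fixed points, $f$ a real function on $\mathcal{X}$, $h=(h_1,\ldots,h_m)^T$ real functions on $\mathcal{X}$, $\beta^\star\in\mathbb{R}^m$ with support $S^\star=\{k:\beta^\star_k\ne0\}$ of cardinality $\ell^\star\ge1$, $\overline{S^\star}=\{1,\ldots,m\}\setminus S^\star$, and $\lambda>0$. Let $H_c$ be the $n\times m$ column-centered matrix with entries $h_j(x_i)-n^{-1}\sum_{r}h_j(x_r)$, $H_{c,k}$ its $k$-th column, $H_{c,S^\star}$ the $n\times\ell^\star$ submatrix of columns indexed by $S^\star$, $f_c^{(n)}$ the centered vector with entries $f(x_i)-n^{-1}\sum_rf(x_r)$, and $\epsilon_c^{(n)}=f_c^{(n)}-H_c\beta^\star$. Suppose there exists $\nu>0$ such that $\|H_{c,S^\star}u\|_2^2\ge n\nu\|u\|_2^2$ for all $u\in\mathbb{R}^{\ell^\star}$, and there exists $\kappa\in(0,1]$ such that $$\frac{\ell^\star}{\nu n}\max_{k\in\overline{S^\star}}\max_{j\in S^\star}|H_{c,j}^TH_{c,k}|\le1-\kappa,\qquad\max_{k=1,\ldots,m}|H_{c,k}^T\epsilon_c^{(n)}|\le\tfrac12\kappa\lambda n.$$ Then the minimizer $\hat\beta^{\mathrm{lasso}}$ of $\beta\mapsto\frac{1}{2n}\|f_c^{(n)}-H_c\beta\|_2^2+\lambda\|\beta\|_1$ over $\mathbb{R}^m$ is unique, satisfies $\operatorname{supp}(\hat\beta^{\mathrm{lasso}})\subset S^\star$, and $$\max_{k\in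 S^\star}|\hat\beta^{\mathrm{lasso}}_k-\beta^\star_k|\le(1+\kappa/2)\sqrt{\ell^\star}\,\lambda/\nu.$$
   Context: $\operatorname{supp}(\beta)=\{j:\beta_j\neq0\}$. No probabilistic structure is involved: all quantities are deterministic. *)

From HB Require Import structures.
From mathcomp Require Import all_boot all_order all_algebra.
From mathcomp Require Import reals.
Set Implicit Arguments. Unset Strict Implicit. Unset Printing Implicit Defensive.
Import Order.TTheory GRing.Theory Num.Theory.
Local Open Scope ring_scope.

Section Lasso.
Variables (R : realType) (X : Type) (n m : nat).

Definition sqnorm (p : nat) (v : 'cV[R]_p) : R := \sum_(i < p) v i 0 ^+ 2.
Definition l1norm (p : nat) (v : 'cV[R]_p) : R := \sum_(i < p) `|v i 0|.
Definition supp (p : nat) (v : 'cV[R]_p) : {set 'I_p} := [set k | v k 0 != 0].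

Definition Hc (x : 'I_n -> X) (h : 'I_m -> X -> R) : 'M[R]_(n, m) :=
  \matrix_(i < n, j < m) (h j (x i) - n%:R^-1 * \sum_(r < n) h j (x r)).
Definition fc (x : 'I_n -> X) (f : X -> R) : 'cV[R]_n :=
  \col_(i < n) (f (x i) - n%:R^-1 * \sum_(r < n) f (x r)).
Definition epsc x f h (bstar : 'cV[R]_m) : 'cV[R]_n := fc x f - Hc x h *m bstar.

(* H_{c,S}: submatrix of the columns indexed by S (in increasing order) *)
Definition HcS x h (S : {set 'I_m}) : 'M[R]_(n, #|S|) :=
  colsub (fun i : 'I_#|S| => enum_val i) (Hc x h).

Definition colcol x h (j k : 'I_m) : R := \sum_(i < n) Hc x h i j * Hc x h i k.
Definition colvec x h (k : 'I_m) (v : 'cV[R]_n) : R := \sum_(i < n) Hc x h i k * v i 0.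

Definition lasso_obj x f h (lam : R) (b : 'cV[R]_m) : R :=
  (2 * n%:R)^-1 * sqnorm (fc x f - Hc x h *m b) + lam * l1norm b.

Definition is_lasso_min x f h lam (b : 'cV[R]_m) : Prop :=
  forall b' : 'cV[R]_m, lasso_obj x f h lam b <= lasso_obj x f h lam b'.

End Lasso.

From mathcomp Require Import all_boot all_order all_algebra.
From mathcomp Require Import reals ring lra.
From mathcomp Require Import boolp classical_sets topology normedtype derive.
Set Implicit Arguments. Unset Strict Implicit. Unset Printing Implicit Defensive.
Import Order.TTheory GRing.Theory Num.Theory.
Import numFieldNormedType.Exports.
Local Open Scope ring_scope.

(* Primal-dual witness.  Let S be the support of beta*.  Minimise the lasso
   objective over the vectors supported on S; this restricted problem has a
   minimiser b by compactness, and b satisfies the coordinatewise KKT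
   conditions on S, i.e. its residual correlations are bounded by lambda
   there.  For D = b - beta*, these conditions, the noise bound and the
   restricted eigenvalue nu give nu |D|_2^2 <= (1 + kappa/2) lambda |D|_1,
   hence, by Cauchy-Schwarz on S, nu |D|_2 <= (1 + kappa/2) lambda sqrt l.
   Through the incoherence condition this makes every residual correlation
   off S strictly smaller than lambda, so b satisfies the KKT conditions
   everywhere and is a global minimiser.  Any other minimiser c ties with b in
   every KKT inequality; the strict inequality off S forces c to vanish
   there, and then H_c (c - b) = 0 and the restricted eigenvalue condition
   give c = b. *)

Section ColumnVectors.
Variable R : realType.

Lemma supp_subsetP p (v : 'cV[R]_p) (S : {set 'I_p}) :
  reflect (forall k, k \notin S -> v k 0 = 0) (supp v \subset S).
Proof.
apply: (iffP fintype.subsetP) => [vS k kS | v0 k].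
  by apply/eqP; apply: contraNT kS => vk; apply: vS; rewrite inE.
by rewrite inE; apply: contraR => /v0 ->; rewrite eqxx.
Qed.

Lemma sqnorm_ge0 p (v : 'cV[R]_p) : 0 <= sqnorm v.
Proof. by apply: sumr_ge0 => i _; exact: sqr_ge0. Qed.

Lemma sqnormZ p (a : R) (v : 'cV[R]_p) : sqnorm (a *: v) = a ^+ 2 * sqnorm v.
Proof. by rewrite /sqnorm mulr_sumr; apply: eq_bigr => i _; rewrite mxE exprMn. Qed.

Lemma sqnorm0 p : sqnorm (0 : 'cV[R]_p) = 0.
Proof. by rewrite /sqnorm big1 // => i _; rewrite mxE expr0n. Qed.

Lemma sqr_coord_le_sqnorm p (v : 'cV[R]_p) k : v k 0 ^+ 2 <= sqnorm v.
Proof.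
by rewrite /sqnorm (bigD1 k) //= lerDl; apply: sumr_ge0 => j _; exact: sqr_ge0.
Qed.

Lemma sqnorm_eq0 p (v : 'cV[R]_p) : sqnorm v = 0 -> v = 0.
Proof.
move=> v0; apply/matrixP => k j; rewrite (ord1 j) mxE; apply/eqP.
by rewrite -sqrf_eq0 eq_le sqr_ge0 andbT -v0 sqr_coord_le_sqnorm.
Qed.

Lemma l1norm_ge0 p (v : 'cV[R]_p) : 0 <= l1norm v.
Proof. exact: sumr_ge0. Qed.

Lemma norm_coord_le_l1norm p (v : 'cV[R]_p) k : `|v k 0| <= l1norm v.
Proof. by rewrite /l1norm (bigD1 k) //= lerDl; exact: sumr_ge0. Qed.

Definition vdot p (u v : 'cV[R]_p) : R := (u^T *m v) 0 0.

Lemma vdotE p (u v : 'cV[R]_p) : vdot u v = \sum_i u i 0 * v i 0.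
Proof. by rewrite /vdot mxE; apply: eq_bigr => i _; rewrite mxE. Qed.

Lemma vdotC p (u v : 'cV[R]_p) : vdot u v = vdot v u.
Proof. by rewrite !vdotE; apply: eq_bigr => i _; rewrite mulrC. Qed.

Lemma vdot_mulmxl p q (A : 'M[R]_(p, q)) (d : 'cV[R]_q) (w : 'cV[R]_p) :
  vdot (A *m d) w = vdot d (A^T *m w).
Proof. by rewrite /vdot trmx_mul mulmxA. Qed.

Lemma sqnorm_vdot p (v : 'cV[R]_p) : sqnorm v = vdot v v.
Proof. by rewrite vdotE; apply: eq_bigr => i _; rewrite expr2. Qed.

Lemma sqnormB p (u v : 'cV[R]_p) :
  sqnorm (u - v) = sqnorm u - 2 * vdot u v + sqnorm v.
Proof.
rewrite vdotE /sqnorm mulr_sumr -sumrB -big_split /=.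
by apply: eq_bigr => i _; rewrite !mxE; ring.
Qed.

Lemma norm_vdot_le_l1norm p (S : {set 'I_p}) (u v : 'cV[R]_p) (c : R) :
  supp u \subset S -> (forall k, k \in S -> `|v k 0| <= c) ->
  `|vdot u v| <= c * l1norm u.
Proof.
move=> /supp_subsetP uS vc; rewrite vdotE /l1norm mulr_sumr.
apply: le_trans (ler_norm_sum _ _ _) _; apply: ler_sum => k _.
have [kS | /uS ->] := boolP (k \in S); last by rewrite mul0r normr0 mulr0.
by rewrite normrM mulrC ler_wpM2r // vc.
Qed.

Lemma sum_supp p (S : {set 'I_p}) (F : 'I_p -> R) :
  (forall k, k \notin S -> F k = 0) -> \sum_(k in S) F k = \sum_k F k.
Proof. by move=> F0; rewrite [RHS](bigID (mem S)) /= [X in _ = _ + X]big1 ?addr0. Qed.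

Lemma sum_enum_val p (S : {set 'I_p}) (F : 'I_p -> R) :
  (forall k, k \notin S -> F k = 0) -> \sum_(i < #|S|) F (enum_val i) = \sum_k F k.
Proof. by move=> F0; rewrite -(big_enum_val (A := mem S)) /= sum_supp. Qed.

Lemma colsub_supp_mulmx q p (A : 'M[R]_(q, p)) (S : {set 'I_p}) (d : 'cV[R]_p) :
  supp d \subset S ->
  colsub (fun i : 'I_#|S| => enum_val i) A *m \col_i d (enum_val i) 0 = A *m d.
Proof.
move=> /supp_subsetP dS; apply/matrixP => i j; rewrite (ord1 j) !mxE.
under eq_bigr do rewrite !mxE.
by apply: (sum_enum_val (F := fun k => A i k * d k 0)) => k /dS ->; rewrite mulr0.
Qed.

Lemma sqnorm_col_enum_val p (S : {set 'I_p}) (d : 'cV[R]_p) :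
  supp d \subset S -> sqnorm (\col_(i < #|S|) d (enum_val i) 0) = sqnorm d.
Proof.
move=> /supp_subsetP dS; rewrite /sqnorm; under eq_bigr do rewrite mxE.
by apply: (sum_enum_val (F := fun k => d k 0 ^+ 2)) => k /dS ->; rewrite expr0n.
Qed.

Lemma sqr_l1norm_le p (S : {set 'I_p}) (v : 'cV[R]_p) :
  supp v \subset S -> l1norm v ^+ 2 <= #|S|%:R * sqnorm v.
Proof.
move=> /supp_subsetP vS; set s := l1norm v; set l : R := #|S|%:R.
have s_eq : \sum_(k in S) `|v k 0| = s.
  by rewrite /s /l1norm; apply: sum_supp => k /vS ->; rewrite normr0.
have Q_eq : \sum_(k in S) v k 0 ^+ 2 = sqnorm v.
  by rewrite /sqnorm; apply: sum_supp => k /vS ->; rewrite expr0n.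
have spread : 0 <= l * (l * sqnorm v - s ^+ 2).
  have <- : \sum_(k in S) (l * `|v k 0| - s) ^+ 2 = l * (l * sqnorm v - s ^+ 2).
    rewrite (eq_bigr (fun k => l ^+ 2 * v k 0 ^+ 2 - 2 * l * s * `|v k 0| + s ^+ 2));
      last by move=> k _; rewrite -(real_normK (num_real (v k 0))); ring.
    rewrite !big_split sumrN /= -!mulr_sumr s_eq Q_eq sumr_const -mulr_natl.
    by rewrite /l; ring.
  by apply: sumr_ge0 => k _; exact: sqr_ge0.
have [S0 | S_gt0] := posnP #|S|.
  by rewrite -s_eq (cards0_eq S0) big_set0 expr0n mulr_ge0 ?ler0n ?sqnorm_ge0.
by rewrite -subr_ge0; move: spread; rewrite pmulr_rge0 // ltr0n.
Qed.

End ColumnVectors.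

Section RealInequalities.
Variable R : realType.

Lemma first_order_ge0 (a C : R) : 0 <= C ->
  (forall e, 0 < e -> e <= 1 -> 0 <= e * a + e ^+ 2 * C) -> 0 <= a.
Proof.
move=> C0 small; rewrite leNgt; apply/negP => a_lt0.
have Ca : 0 < C - a by lra.
pose e := - a / (C - a).
have e_gt0 : 0 < e by rewrite divr_gt0 ?oppr_gt0.
have e_le1 : e <= 1 by rewrite ler_pdivrMr // mul1r; lra.
have := small e e_gt0 e_le1.
(* The step size is chosen so that [a + e * C = - a ^+ 2 / (C - a) < 0]. *)
have -> : e * a + e ^+ 2 * C = - e * (a ^+ 2 / (C - a)).
  by rewrite /e; field; exact: lt0r_neq0.
have : 0 < a ^+ 2 / (C - a) by rewrite divr_gt0 //; nra.
nra.
Qed.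

Lemma subgrad_norm_le (a g lam : R) : 0 <= lam ->
  (forall t, (t - a) * g <= lam * (`|t| - `|a|)) -> `|g| <= lam.
Proof.
move=> lam0 sub.
have step d : d * g <= lam * `|d|.
  have := sub (a + d); rewrite addrAC subrr add0r => /le_trans; apply.
  by rewrite ler_wpM2l // lerBlDl ler_normD.
rewrite ler_norml; apply/andP; split.
  by rewrite lerNl -mulN1r; apply: le_trans (step (-1)) _; rewrite normrN normr1 mulr1.
by rewrite -[g]mul1r; apply: le_trans (step 1) _; rewrite normr1 mulr1.
Qed.

Lemma norm_lerp_le (a u e : R) : 0 <= e -> e <= 1 ->
  `|a + e * (u - a)| <= (1 - e) * `|a| + e * `|u|.
Proof.
move=> e0 e1; have -> : a + e * (u - a) = (1 - e) * a + e * u by ring.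
apply: le_trans (ler_normD _ _) _.
by rewrite !normrM (ger0_norm e0) ger0_norm // subr_ge0.
Qed.

Lemma quadratic_self_bound (nu K Q s l : R) :
  0 <= nu -> 0 <= K -> 0 <= l -> 0 <= Q -> 0 <= s ->
  nu * Q <= K * s -> s ^+ 2 <= l * Q ->
  nu ^+ 2 * Q <= K ^+ 2 * l /\ nu * s <= l * K.
Proof.
move=> nu0 K0 l0 Q0 s0 lin cs.
have quad : nu ^+ 2 * Q <= K ^+ 2 * l.
  have [-> | Q_gt0] := eqVneq Q 0; first by rewrite mulr0 mulr_ge0 ?sqr_ge0.
  have : nu ^+ 2 * Q * Q <= K ^+ 2 * l * Q.
    have h1 : (nu * Q) ^+ 2 <= (K * s) ^+ 2 by rewrite ler_pXn2r ?nnegrE ?mulr_ge0.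
    have h2 : (K * s) ^+ 2 <= K ^+ 2 * (l * Q) by rewrite exprMn ler_wpM2l ?sqr_ge0.
    nra.
  by rewrite ler_pM2r // lt0r Q_gt0.
split=> //.
have : (nu * s) ^+ 2 <= (l * K) ^+ 2.
  have : nu ^+ 2 * s ^+ 2 <= nu ^+ 2 * (l * Q) by rewrite ler_wpM2l ?sqr_ge0.
  nra.
by rewrite ler_pXn2r ?nnegrE ?mulr_ge0.
Qed.

End RealInequalities.

Lemma continuous_sum (R : realType) (T : topologicalType) (I : finType)
    (F : I -> T -> R) :
  (forall i, continuous (F i)) -> continuous (fun v => \sum_i F i v).
Proof.
move=> cF; rewrite /index_enum; elim: (Finite.enum I) => [|i r IH].
  under eq_fun do rewrite big_nil; exact: cst_continuous.
under eq_fun do rewrite big_cons.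
by move=> v; apply: continuousD; [exact: cF | exact: IH].
Qed.

Lemma box_argmin (R : realType) (m : nat) (g : 'rV[R]_m -> R) (M : R) :
  0 <= M -> continuous g ->
  exists2 c : 'rV[R]_m, (forall i, `|c 0 i| <= M) &
    forall t : 'rV[R]_m, (forall i, `|t 0 i| <= M) -> g c <= g t.
Proof.
move=> M0 cg.
pose box := [set v : 'rV[R]_m | forall i, `[-M, M]%classic (v ord0 i)]%classic.
have in_box (t : 'rV[R]_m) : (forall i, `|t 0 i| <= M) <-> t \in box.
  by rewrite inE; split=> tM i; have := tM i; rewrite /= in_itv /= ler_norml.
have box0 : (box !=set0)%classic.
  by exists 0 => i /=; rewrite mxE in_itv /= lerNl oppr0 M0.
have box_compact : compact box.
  exact: rV_compact (fun=> @segment_compact R (-M) M).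
have [c /in_box c_box c_min] := EVT_min_rV box0 box_compact (continuous_subspaceT cg).
by exists c => // t /in_box; exact: c_min.
Qed.

Section Lasso.
Variables (R : realType) (n m : nat) (A : 'M[R]_(n, m)) (y : 'cV[R]_n) (lam : R).
Hypothesis n_gt0 : (0 < n)%N.

Definition lasso (b : 'cV[R]_m) : R :=
  (2 * n%:R)^-1 * sqnorm (y - A *m b) + lam * l1norm b.

(* The negative gradient of the least-squares part of [lasso]. *)
Definition resid_corr (b : 'cV[R]_m) : 'cV[R]_m := n%:R^-1 *: (A^T *m (y - A *m b)).

Definition lasso_kkt (b : 'cV[R]_m) (k : 'I_m) : Prop :=
  forall t, (t - b k 0) * resid_corr b k 0 <= lam * (`|t| - `|b k 0|).

Let n_neq0 : n%:R != 0 :> R. Proof. by rewrite pnatr_eq0 -lt0n. Qed.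

Let half_n_ge0 : 0 <= (2 * n%:R)^-1 :> R.
Proof. by rewrite invr_ge0 mulr_ge0 ?ler0n. Qed.

Lemma resid_corr_decomp (bstar b : 'cV[R]_m) :
  n%:R *: resid_corr b = A^T *m (y - A *m bstar) - A^T *m A *m (b - bstar).
Proof.
rewrite /resid_corr scalerA mulfV // scale1r.
have -> : y - A *m b = (y - A *m bstar) - A *m (b - bstar).
  by rewrite mulmxBr opprB addrA subrK.
by rewrite mulmxBr mulmxA.
Qed.

Lemma lasso_expand (b c : 'cV[R]_m) :
  lasso c = lasso b
    + \sum_k (lam * (`|c k 0| - `|b k 0|) - (c k 0 - b k 0) * resid_corr b k 0)
    + (2 * n%:R)^-1 * sqnorm (A *m (c - b)).
Proof.
rewrite /lasso; have -> : y - A *m c = (y - A *m b) - A *m (c - b).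
  by rewrite mulmxBr opprB addrA subrK.
rewrite sqnormB vdotC vdot_mulmxl.
have -> : vdot (c - b) (A^T *m (y - A *m b))
          = n%:R * \sum_k (c k 0 - b k 0) * resid_corr b k 0.
  by rewrite vdotE mulr_sumr; apply: eq_bigr => k _; rewrite /resid_corr !mxE; field.
rewrite /l1norm big_split /= sumrN -mulr_sumr sumrB.
by field.
Qed.

Lemma lasso_kkt_coord (b : 'cV[R]_m) j u : 0 <= lam ->
  (forall e, 0 < e -> e <= 1 ->
     lasso b <= lasso (b + (e * (u - b j 0)) *: delta_mx j 0)) ->
  (u - b j 0) * resid_corr b j 0 <= lam * (`|u| - `|b j 0|).
Proof.
move=> lam0 no_descent; rewrite -subr_ge0.
set C := (2 * n%:R)^-1 * sqnorm (A *m ((u - b j 0) *: delta_mx j 0)).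
apply: (@first_order_ge0 _ _ C); first by rewrite mulr_ge0 ?half_n_ge0 ?sqnorm_ge0.
move=> e e0 e1; have := no_descent e e0 e1.
set c := b + _ *: _.
have cb : c - b = e *: ((u - b j 0) *: delta_mx j 0).
  by rewrite addrAC subrr add0r scalerA.
have cj : c j 0 - b j 0 = e * (u - b j 0).
  by rewrite !mxE !eqxx mulr1 addrAC subrr add0r.
have ck k : k != j -> c k 0 = b k 0 by move=> kj; rewrite !mxE (negbTE kj) mulr0 addr0.
rewrite (lasso_expand b c) (bigD1 j) //= big1 => [|k kj]; last first.
  by rewrite ck // !subrr mulr0 mul0r subrr.
have quad : (2 * n%:R)^-1 * sqnorm (A *m (c - b)) = e ^+ 2 * C.
  by rewrite cb -scalemxAr sqnormZ /C mulrCA.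
have cvx : lam * (`|c j 0| - `|b j 0|) <= lam * (e * (`|u| - `|b j 0|)).
  rewrite ler_wpM2l // lerBlDr.
  have -> : c j 0 = b j 0 + e * (u - b j 0) by rewrite -cj; ring.
  by apply: le_trans (norm_lerp_le _ _ (ltW e0) e1) _; lra.
rewrite quad cj addr0; set G := resid_corr b j 0.
have -> : e * (lam * (`|u| - `|b j 0|) - (u - b j 0) * G) =
          lam * (e * (`|u| - `|b j 0|)) - e * (u - b j 0) * G by ring.
lra.
Qed.

Lemma lasso_min_of_kkt (b : 'cV[R]_m) :
  (forall k, lasso_kkt b k) -> forall c, lasso b <= lasso c.
Proof.
move=> kkt c; rewrite (lasso_expand b c) -addrA lerDl.
rewrite addr_ge0 ?mulr_ge0 ?half_n_ge0 ?sqnorm_ge0 //.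
by apply: sumr_ge0 => k _; rewrite subr_ge0; exact: kkt.
Qed.

Lemma lasso_kkt_tight (b c : 'cV[R]_m) :
  (forall k, lasso_kkt b k) -> lasso c <= lasso b ->
  (forall k, (c k 0 - b k 0) * resid_corr b k 0 = lam * (`|c k 0| - `|b k 0|))
  /\ A *m (c - b) = 0.
Proof.
move=> kkt; rewrite (lasso_expand b c).
set T := \sum_k _; set Q := sqnorm _.
have excess_ge0 k :
    0 <= lam * (`|c k 0| - `|b k 0|) - (c k 0 - b k 0) * resid_corr b k 0.
  by rewrite subr_ge0; exact: kkt.
have T0 : 0 <= T by exact: sumr_ge0.
have Q0 : 0 <= (2 * n%:R)^-1 * Q by rewrite mulr_ge0 ?half_n_ge0 ?sqnorm_ge0.
move=> le_cb; have /eqP : T + (2 * n%:R)^-1 * Q = 0 by lra.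
have two_n_neq0 : 2 * n%:R != 0 :> R by rewrite mulf_neq0 ?n_neq0 // pnatr_eq0.
rewrite paddr_eq0 // mulf_eq0 invr_eq0 (negbTE two_n_neq0) /=.
move=> /andP[/eqP T_eq0 /eqP Q_eq0].
split; last exact: sqnorm_eq0.
move=> k; apply/eqP; rewrite eq_sym -subr_eq0.
by move/eqP: T_eq0; rewrite psumr_eq0 // => /allP/(_ k (mem_index_enum _)).
Qed.

Lemma lasso_ge_l1norm (b : 'cV[R]_m) : 0 <= lam -> lam * l1norm b <= lasso b.
Proof. by move=> lam0; rewrite /lasso lerDr mulr_ge0 ?sqnorm_ge0. Qed.

(* Parametrised by row vectors, the setting of the extreme value theorem
   [EVT_min_rV]. *)
Definition restrict_rV (S : {set 'I_m}) (v : 'rV[R]_m) : 'cV[R]_m :=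
  \col_k (if k \in S then v 0 k else 0).

Lemma continuous_lasso_restrict (S : {set 'I_m}) :
  continuous (fun v => lasso (restrict_rV S v)).
Proof.
have coord k : continuous (fun v => restrict_rV S v k 0).
  rewrite /restrict_rV; under eq_fun do rewrite mxE.
  by case: (k \in S); [exact: coord_continuous | exact: cst_continuous].
have resid i : continuous (fun v => (y - A *m restrict_rV S v) i 0).
  under eq_fun do rewrite mxE [in X in _ + X]mxE [in X in - X]mxE.
  move=> v; apply: (continuousB (f := fun=> _) (g := fun v => _)).
    exact: cst_continuous.
  apply: continuous_sum => k w.
  by apply: continuousM; [exact: cst_continuous | exact: coord].
move=> v; apply: (continuousD (f := fun v => _) (g := fun v => _)).
  apply: (continuousM (s := fun=> _) (t := fun v => _)); first exact: cst_continuous.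
  apply: continuous_sum => i w; under eq_fun do rewrite expr2.
  by apply: (continuousM (s := fun v => _) (t := fun v => _)); exact: resid.
apply: (continuousM (s := fun=> _) (t := fun v => _)); first exact: cst_continuous.
apply: continuous_sum => k w.
by apply: continuous_comp (coord k w) _; exact: norm_continuous.
Qed.

Lemma lasso_min_on_exists (S : {set 'I_m}) : 0 < lam ->
  exists2 b, supp b \subset S & forall c, supp c \subset S -> lasso b <= lasso c.
Proof.
(* A competitor c with [lasso c <= lasso 0] has |c_k| <= |c|_1 <= M, so it
   suffices to minimise over the box of radius M. *)
move=> lam_gt0; have lam0 := ltW lam_gt0; pose M := lasso 0 / lam.
have M0 : 0 <= M.
  rewrite divr_ge0 //; apply: le_trans (lasso_ge_l1norm _ lam0).
  by rewrite mulr_ge0 ?l1norm_ge0.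
have [c0 _ c0_min] := box_argmin M0 (@continuous_lasso_restrict S).
exists (restrict_rV S c0); first by apply/supp_subsetP => k kS; rewrite mxE (negbTE kS).
move=> c /supp_subsetP cS.
have restrict_c : restrict_rV S c^T = c.
  by apply/matrixP => k j; rewrite (ord1 j) !mxE; case: ifP => // /negbT /cS ->.
have restrict_0 : restrict_rV S 0 = 0 by apply/matrixP => k j; rewrite !mxE; case: ifP.
have [c_le | c_gt] := lerP (lasso c) (lasso 0).
  rewrite -restrict_c; apply: c0_min => i; rewrite mxE /M ler_pdivlMr // mulrC.
  apply: le_trans c_le; apply: le_trans (lasso_ge_l1norm _ lam0).
  by rewrite ler_wpM2l ?norm_coord_le_l1norm.
apply: le_trans (ltW c_gt); rewrite -[X in _ <= lasso X]restrict_0.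
by apply: c0_min => i; rewrite mxE normr0.
Qed.

End Lasso.

Section PrimalDualWitness.
Variables (R : realType) (n m : nat) (A : 'M[R]_(n, m)) (y : 'cV[R]_n).
Variables (bstar : 'cV[R]_m) (lam nu kappa : R).
Local Notation S := (supp bstar).
Local Notation K := ((1 + kappa / 2) * lam).

Hypotheses (n_gt0 : (0 < n)%N) (S_gt0 : (0 < #|S|)%N).
Hypotheses (lam_gt0 : 0 < lam) (nu_gt0 : 0 < nu).
Hypotheses (kappa_gt0 : 0 < kappa) (kappa_le1 : kappa <= 1).
Hypothesis restricted_eig :
  forall d, supp d \subset S -> n%:R * nu * sqnorm d <= sqnorm (A *m d).
Hypothesis incoherence : forall k, k \notin S -> forall j, j \in S ->
  #|S|%:R / (nu * n%:R) * `|(A^T *m A) j k| <= 1 - kappa.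
Hypothesis noise_small :
  forall k, `|(A^T *m (y - A *m bstar)) k 0| <= 2^-1 * kappa * lam * n%:R.

Let n_gt0R : 0 < n%:R :> R. Proof. by rewrite ltr0n. Qed.

Let K_ge0 : 0 <= K. Proof. by rewrite mulr_ge0 ?addr_ge0 ?divr_ge0 // ltW. Qed.

Let bstar_off k : k \notin S -> bstar k 0 = 0. Proof. exact/supp_subsetP. Qed.

Section Witness.
Variable b : 'cV[R]_m.
Hypothesis b_supp : supp b \subset S.
Hypothesis b_min_on_S :
  forall c, supp c \subset S -> lasso A y lam b <= lasso A y lam c.

Local Notation g := (resid_corr A y b).
Local Notation D := (b - bstar).

Let b_off k : k \notin S -> b k 0 = 0. Proof. exact/supp_subsetP. Qed.

Lemma err_supp : supp D \subset S.
Proof. by apply/supp_subsetP => k kS; rewrite !mxE b_off // bstar_off // subrr. Qed.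

Lemma kkt_on_supp j : j \in S -> lasso_kkt A y lam b j.
Proof.
move=> jS t; apply: lasso_kkt_coord => // [|e _ _]; first exact: ltW.
apply: b_min_on_S; apply/supp_subsetP => k kS.
have kj : k != j by apply: contraNneq kS => ->.
by rewrite !mxE (negbTE kj) mulr0 addr0 b_off.
Qed.

Lemma gram_err_entry k :
  (A^T *m A *m D) k 0 = (A^T *m (y - A *m bstar)) k 0 - n%:R * g k 0.
Proof.
rewrite (_ : A^T *m A *m D = A^T *m (y - A *m bstar) - n%:R *: g) ?mxE //.
by rewrite (resid_corr_decomp A y n_gt0 bstar) opprB subrKC.
Qed.

Lemma gram_err_on_supp j : j \in S -> `|(A^T *m A *m D) j 0| <= K * n%:R.
Proof.
move=> jS; rewrite gram_err_entry.
apply: le_trans (ler_normB _ _) _; rewrite normrM ger0_norm ?ler0n //.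
have /(ler_wpM2l (ler0n R n)) := subgrad_norm_le (ltW lam_gt0) (kkt_on_supp jS).
have := noise_small j; lra.
Qed.

Lemma err_energy : nu * sqnorm D <= K * l1norm D.
Proof.
rewrite -(ler_pM2l n_gt0R) mulrA; apply: le_trans (restricted_eig err_supp) _.
rewrite sqnorm_vdot vdot_mulmxl mulmxA; apply: le_trans (ler_norm _) _.
rewrite mulrCA mulrA; apply: norm_vdot_le_l1norm err_supp _ => j jS.
exact: gram_err_on_supp.
Qed.

Lemma err_bounds :
  nu ^+ 2 * sqnorm D <= K ^+ 2 * #|S|%:R /\ nu * l1norm D <= #|S|%:R * K.
Proof.
apply: quadratic_self_bound.
- exact: ltW.
- exact: K_ge0.
- exact: ler0n.
- exact: sqnorm_ge0.
- exact: l1norm_ge0.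
- exact: err_energy.
- exact: sqr_l1norm_le err_supp.
Qed.

Lemma gram_err_off_supp k : k \notin S ->
  `|(A^T *m A *m D) k 0| <= (1 - kappa) * n%:R * K.
Proof.
move=> kS.
have -> : (A^T *m A *m D) k 0 = vdot D (col k (A^T *m A)).
  rewrite vdotE !mxE; apply: eq_bigr => j _; rewrite !mxE mulrC; congr (_ * _).
  by apply: eq_bigr => i _; rewrite !mxE mulrC.
pose c := (1 - kappa) * (nu * n%:R) / #|S|%:R.
apply: le_trans (norm_vdot_le_l1norm (c := c) err_supp _) _.
  move=> j jS; rewrite mxE /c ler_pdivlMr ?ltr0n // mulrC.
  by have := incoherence kS jS; rewrite mulrAC ler_pdivrMr // mulr_gt0.
have [_ l1_le] := err_bounds.
have -> : c * l1norm D = (1 - kappa) * n%:R / #|S|%:R * (nu * l1norm D).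
  by rewrite /c; ring.
apply: le_trans (ler_wpM2l _ l1_le) _.
  by rewrite divr_ge0 ?mulr_ge0 ?ler0n // subr_ge0.
by rewrite [_ * (_ * K)]mulrA divfK // pnatr_eq0 -lt0n.
Qed.

Lemma corr_off_supp k : k \notin S -> `|g k 0| < lam.
Proof.
move=> kS; rewrite -(ltr_pM2l n_gt0R) -[X in X * _ < _](ger0_norm (ltW n_gt0R)).
rewrite -normrM.
have -> : n%:R * g k 0 = (A^T *m (y - A *m bstar)) k 0 - (A^T *m A *m D) k 0.
  by rewrite gram_err_entry; ring.
apply: le_lt_trans (ler_normB _ _) _.
(* kappa lambda n / 2 + (1 - kappa) (1 + kappa/2) lambda n = (1 - kappa^2/2) lambda n *)
have := gram_err_off_supp kS; have := noise_small k.
have : 0 < kappa ^+ 2 * lam * n%:R by rewrite !mulr_gt0 ?exprn_gt0.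
lra.
Qed.

Lemma kkt_everywhere k : lasso_kkt A y lam b k.
Proof.
have [kS | kS] := boolP (k \in S); first exact: kkt_on_supp.
move=> t; rewrite b_off // normr0 !subr0; apply: le_trans (ler_norm _) _.
by rewrite normrM mulrC ler_wpM2r // ltW // corr_off_supp.
Qed.

Lemma lasso_min_unique c :
  (forall c', lasso A y lam c <= lasso A y lam c') -> c = b.
Proof.
move=> c_min.
have [tight A_cb] := lasso_kkt_tight n_gt0 kkt_everywhere (c_min b).
have cb_supp : supp (c - b) \subset S.
  apply/supp_subsetP => k kS; rewrite !mxE b_off // subr0.
  have := tight k; rewrite b_off // normr0 !subr0 => eq_k.
  have : (lam - `|g k 0|) * `|c k 0| <= 0.
    by rewrite mulrBl subr_le0 -eq_k mulrC -normrM ler_norm.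
  by rewrite pmulr_rle0 ?subr_gt0 ?corr_off_supp // normr_le0 => /eqP.
have := restricted_eig cb_supp.
rewrite A_cb sqnorm0 pmulr_rle0 ?mulr_gt0 // => cb_le0.
apply/eqP; rewrite -subr_eq0; apply/eqP/sqnorm_eq0/le_anti.
by rewrite cb_le0 sqnorm_ge0.
Qed.

Lemma err_coord_le k :
  `|b k 0 - bstar k 0| <= (1 + kappa / 2) * Num.sqrt (#|S|%:R) * lam / nu.
Proof.
have [sq_le _] := err_bounds.
have sq : (nu * `|b k 0 - bstar k 0|) ^+ 2 <= (K * Num.sqrt (#|S|%:R)) ^+ 2.
  rewrite [X in X <= _]exprMn [X in _ <= X]exprMn sqr_sqrtr ?ler0n //.
  rewrite real_normK ?num_real //.
  apply: le_trans sq_le; rewrite ler_wpM2l ?sqr_ge0 //.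
  by have := sqr_coord_le_sqnorm D k; rewrite !mxE.
rewrite ler_pdivlMr // mulrC mulrAC -(@ler_pXn2r _ 2) // nnegrE.
  by rewrite mulr_ge0 // ltW.
by rewrite mulr_ge0 ?sqrtr_ge0.
Qed.

End Witness.

Theorem lasso_support_recovery :
  exists bhat : 'cV[R]_m,
    [/\ forall c, lasso A y lam bhat <= lasso A y lam c,
        forall c, (forall c', lasso A y lam c <= lasso A y lam c') -> c = bhat,
        supp bhat \subset S &
        forall k, `|bhat k 0 - bstar k 0|
                    <= (1 + kappa / 2) * Num.sqrt (#|S|%:R) * lam / nu].
Proof.
have [b b_supp b_min] := lasso_min_on_exists A y S lam_gt0.
exists b; split => //.
- exact: (lasso_min_of_kkt n_gt0 (kkt_everywhere b_supp b_min)).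
- exact: (lasso_min_unique b_supp b_min).
- exact: (err_coord_le b_supp b_min).
Qed.

End PrimalDualWitness.

Lemma colcolE (R : realType) (X : Type) (n m : nat) (x : 'I_n -> X)
    (h : 'I_m -> X -> R) j k :
  colcol x h j k = ((Hc x h)^T *m Hc x h) j k.
Proof. by rewrite [RHS]mxE; apply: eq_bigr => i _; rewrite [_^T _ _]mxE. Qed.

Lemma colvecE (R : realType) (X : Type) (n m : nat) (x : 'I_n -> X)
    (h : 'I_m -> X -> R) k (v : 'cV[R]_n) :
  colvec x h k v = ((Hc x h)^T *m v) k 0.
Proof. by rewrite [RHS]mxE; apply: eq_bigr => i _; rewrite [_^T _ _]mxE. Qed.

Theorem lemma9 (R : realType) (X : Type) (n m : nat) (x : 'I_n -> X)
  (f : X -> R) (h : 'I_m -> X -> R) (bstar : 'cV[R]_m) (lam nu kappa : R) :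
  (0 < n)%N ->
  (1 <= #|supp bstar|)%N ->
  0 < lam ->
  0 < nu ->
  (forall u : 'cV[R]_#|supp bstar|,
      sqnorm (HcS x h (supp bstar) *m u) >= n%:R * nu * sqnorm u) ->
  0 < kappa -> kappa <= 1 ->
  (forall k, k \notin supp bstar -> forall j, j \in supp bstar ->
      (#|supp bstar|%:R / (nu * n%:R)) * `|colcol x h j k| <= 1 - kappa) ->
  (forall k : 'I_m, `|colvec x h k (epsc x f h bstar)| <= 2^-1 * kappa * lam * n%:R) ->
  exists bhat : 'cV[R]_m,
    [/\ is_lasso_min x f h lam bhat,
        (forall b : 'cV[R]_m, is_lasso_min x f h lam b -> b = bhat),
        supp bhat \subset supp bstar &
        (forall k, k \in supp bstar ->
           `|bhat k 0 - bstar k 0|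
             <= (1 + kappa / 2) * Num.sqrt (#|supp bstar|%:R) * lam / nu)].
Proof.
move=> n_gt0 S_gt0 lam_gt0 nu_gt0 eig kappa_gt0 kappa_le1 incoh noise.
have [|||bhat [bhat_min bhat_unique bhat_supp bhat_err]] :=
  lasso_support_recovery (A := Hc x h) (y := fc x f)
    n_gt0 S_gt0 lam_gt0 nu_gt0 kappa_gt0 kappa_le1.
- move=> d d_supp; have := eig (\col_i d (enum_val i) 0).
  by rewrite /HcS colsub_supp_mulmx // sqnorm_col_enum_val.
- by move=> k kS j jS; rewrite -colcolE; exact: incoh.
- by move=> k; rewrite -colvecE; exact: noise.
by exists bhat; split=> // k _; exact: bhat_err.
Qed.
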